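(* Let $V$ be a finite set, $s,t\in V$, $d$ an $st$-separating semi-metric on $V$, and $A\subseteq V$ nonempty. Define $f_A^{\pm}:V\to\mathbb R^2$ by $f_A^{\pm}(v)=(f_A^{+}(v),f_A^{-}(v))$ where $f_A^{\sigma}(v)=\tfrac12\left[d(v,s)+\sigma\, d(v,A)\right]$ for $\sigma\in\{+1,-1\}$ and $d(v,A)=\min_{a\in A}d(v,a)$. Then $f_A^{\pm}$ is $st$-sandwiching, i.e. for each $\sigma\in\{+1,-1\}$ and every $v\in V$, $f_A^{\sigma}(s)\le f_A^{\sigma}(v)\le f_A^{\sigma}(t)$.
   Context: A semi-metric on $V$ is a symmetric map $d:V\times V\to\mathbb R_{\ge0}$ with $d(v,v)=0$ satisfying the triangle inequality; it is $st$-separating if $d(s,t)=d(s,v)+d(v,t)$ for all $v\in V$. *)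

From mathcomp Require Import all_boot all_order all_algebra.
From mathcomp Require Import reals.
Set Implicit Arguments. Unset Strict Implicit. Unset Printing Implicit Defensive.
Import Order.TTheory GRing.Theory Num.Theory.
Local Open Scope ring_scope.

Definition semi_metric (R : realType) (V : finType) (d : V -> V -> R) : Prop :=
  [/\ forall u v, 0 <= d u v,
      forall u v, d u v = d v u,
      forall v, d v v = 0
    & forall u v w, d u w <= d u v + d v w].

Definition st_separating (R : realType) (V : finType) (d : V -> V -> R) (s t : V) : Prop :=
  forall v, d s t = d s v + d v t.

(* d(v,A) = min_{a in A} d(v,a), for nonempty A (value for empty A is irrelevant: 0). *)
Definition dist_set (R : realType) (V : finType) (d : V -> V -> R) (v : V) (A : {set V}) : R :=
  match [pick a in A] with
  | Some a0 => d v (Order.arg_min a0 (fun a => a \in A) (d v))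
  | None => 0
  end.

Definition fA (R : realType) (V : finType) (d : V -> V -> R) (s : V) (A : {set V})
  (sigma : bool) (v : V) : R :=
  (d v s + (if sigma then 1 else -1) * dist_set d v A) / 2.

(* A map f : V -> R^2 (given as its two coordinates) is st-sandwiching. *)
Definition st_sandwiching (R : realType) (V : finType) (f : bool -> V -> R) (s t : V) : Prop :=
  forall sigma v, f sigma s <= f sigma v /\ f sigma v <= f sigma t.

From mathcomp Require Import all_boot all_order all_algebra.
From mathcomp Require Import reals.
From mathcomp Require Import lra.
Import Order.TTheory GRing.Theory Num.Theory.
Local Open Scope ring_scope.

(* Since d(.,A) is 1-Lipschitz, f^sigma(v) - f^sigma(s) = (d(v,s) + sigma (d(v,A) - d(s,A)))/2 is
   nonnegative; by separation d(t,s) - d(v,s) = d(v,t), so f^sigma(t) - f^sigma(v) is nonnegative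
   for the same reason. *)

Set Implicit Arguments.
Unset Strict Implicit.

Section DistSet.

Variables (R : realType) (V : finType) (d : V -> V -> R) (A : {set V}).
Hypothesis A_neq0 : A != set0.

Lemma dist_setP (v : V) :
  exists2 a, a \in A & dist_set d v A = d v a.
Proof.
rewrite /dist_set; case: pickP => [a0 a0A | A_empty]; last first.
  by case/set0Pn: A_neq0 => x; rewrite A_empty.
by case: (arg_minP (d v) a0A) => a aA _; exists a.
Qed.

Lemma dist_set_le (v b : V) : b \in A -> dist_set d v A <= d v b.
Proof.
rewrite /dist_set; case: pickP => [a0 a0A | A_empty]; last by rewrite A_empty.
by move=> bA; case: (arg_minP (d v) a0A) => a _; apply.
Qed.

Hypothesis d_semi_metric : semi_metric d.

Lemma dist_set_triangle (u v : V) : dist_set d u A <= d u v + dist_set d v A.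
Proof.
have [_ _ _ d_tri] := d_semi_metric.
have [a aA ->] := dist_setP v.
exact: le_trans (dist_set_le u aA) (d_tri u v a).
Qed.

Lemma dist_set_lipschitz (u v : V) : `|dist_set d u A - dist_set d v A| <= d u v.
Proof.
have [_ d_sym _ _] := d_semi_metric.
have := dist_set_triangle u v; have := dist_set_triangle v u.
rewrite ler_norml d_sym; lra.
Qed.

End DistSet.

Theorem proposition2p10 (R : realType) (V : finType) (s t : V) (d : V -> V -> R)
  (A : {set V}) :
  semi_metric d -> st_separating d s t -> A != set0 ->
  st_sandwiching (fA d s A) s t.
Proof.
move=> d_sm d_sep A_neq0 sigma v; rewrite /fA.
have [_ d_sym d_refl _] := d_sm.
have /ler_normlP[lip_vs1 lip_vs2] := dist_set_lipschitz A_neq0 d_sm v s.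
have /ler_normlP[lip_tv1 lip_tv2] := dist_set_lipschitz A_neq0 d_sm t v.
have sep_v := d_sep v.
rewrite d_refl (d_sym v s) (d_sym t s).
rewrite (d_sym v s) in lip_vs1 lip_vs2; rewrite (d_sym t v) in lip_tv1 lip_tv2.
by case: sigma; rewrite ?mul1r ?mulN1r; split; lra.
Qed.
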